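(* For Dallal's model, reparameterize by $(\gamma,U,V)$ with $U=(1+\gamma)\lambda_0$ and $V=(1+\gamma)\lambda_1$; this maps $\Omega$ bijectively onto $(0,1)^3$. Jeffreys' prior in the parameterization $(\gamma,U,V)$ is $$\pi_J(\gamma,u,v)\propto \frac{\gamma^{-1/2}(1-\gamma)^{-1/2}}{1+\gamma}\,(u+rv)^{1/2}\,u^{-1/2}(1-u)^{-1/2}\,v^{-1/2}(1-v)^{-1/2},\qquad 0<\gamma,u,v<1,$$ and this prior is proper. Moreover, under $\pi_J$ the parameter $\gamma$ is independent of $(U,V)$ and its marginal prior density is $$\pi_J(\gamma)=\frac{\sqrt2}{\pi}\,\frac{\gamma^{-1/2}(1-\gamma)^{-1/2}}{1+\gamma},\qquad 0<\gamma<1 .$$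
   Context: Dallal's model for bilateral data. There are two groups, $i=1$ (treatment) and $i=0$ (control), with fixed sample sizes $m_{+1},m_{+0}\ge 1$. For each group $i$, the counts $(m_{0i},m_{1i},m_{2i})$, where $m_{hi}$ is the number of subjects in group $i$ with exactly $h$ of two sites cured and $m_{0i}+m_{1i}+m_{2i}=m_{+i}$, follow a trinomial (multinomial) distribution with $m_{+i}$ trials and cell probabilities $p_{0i}=1-(1+\gamma)\lambda_i$, $p_{1i}=2\gamma\lambda_i$, $p_{2i}=(1-\gamma)\lambda_i$. The two groups are independent. The parameter space is $\Omega=\{(\gamma,\lambda_0,\lambda_1):0<\gamma<1,\ 0<\lambda_0,\lambda_1<1/(1+\gamma)\}$. Write $m_{1+}=m_{10}+m_{11}$, $m_{2+}=m_{20}+m_{21}$, $m_{0+}=m_{00}+m_{01}$, and $r=m_{+1}/m_{+0}$. Jeffreys' prior for a given parameterization is the density proportional to the square root of the determinant of the expected Fisher information matrix of this product-trinomial model (with $m_{+0},m_{+1}$ fixed) in that parameterization. *)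

From Stdlib Require Import Reals Lra ClassicalEpsilon.
Open Scope R_scope.

(* The derivative of f at x (meaningful when f is differentiable at x). *)
Definition deriv1 (f : R -> R) (x : R) : R :=
  epsilon (inhabits 0) (fun l => derivable_pt_lim f x l).

(* Riemann integral of f over [a,b] (0 if f is not Riemann integrable). *)
Definition RInt (f : R -> R) (a b : R) : R :=
  match excluded_middle_informative (inhabited (Riemann_integrable f a b)) with
  | left H => RiemannInt (epsilon H (fun _ => True))
  | right _ => 0
  end.

Definition int2 (f : R -> R -> R) (a b : R) : R :=
  RInt (fun x => RInt (fun y => f x y) a b) a b.
Definition int3 (f : R -> R -> R -> R) (a b : R) : R :=
  RInt (fun x => int2 (f x) a b) a b.

(* Improper integral over the open cube (0,1)^k, as the limit of the
   integrals over [a,b]^k as a -> 0+ and b -> 1-. *)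
Definition limit_cube (F : R -> R -> R) (L : R) : Prop :=
  forall eps, 0 < eps -> exists d, 0 < d /\
    forall a b, 0 < a < d -> 1 - d < b < 1 -> Rabs (F a b - L) < eps.

Definition improper1 (f : R -> R) (L : R) := limit_cube (RInt f) L.
Definition improper2 (f : R -> R -> R) (L : R) := limit_cube (int2 f) L.
Definition improper3 (f : R -> R -> R -> R) (L : R) := limit_cube (int3 f) L.

Definition in01 (x : R) : Prop := 0 < x < 1.

Definition inOmega (t : R * R * R) : Prop :=
  let '(g, l0, l1) := t in
  0 < g < 1 /\ 0 < l0 < 1 / (1 + g) /\ 0 < l1 < 1 / (1 + g).

Definition phi (t : R * R * R) : R * R * R :=
  let '(g, l0, l1) := t in (g, (1 + g) * l0, (1 + g) * l1).

Definition pcell (h : nat) (g lam : R) : R :=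
  match h with
  | O => 1 - (1 + g) * lam
  | 1%nat => 2 * g * lam
  | _ => (1 - g) * lam
  end.

Definition pOmega (h i : nat) (g l0 l1 : R) : R :=
  pcell h g (if Nat.eqb i 0 then l0 else l1).

(* p_{h i} in the parameterization (gamma, U, V): the composition of
   pOmega with the inverse of phi. *)
Definition pGUV (h i : nat) (g u v : R) : R :=
  pOmega h i g (u / (1 + g)) (v / (1 + g)).

Definition sect (j : nat) (f : R -> R -> R -> R) (x y z : R) (t : R) : R :=
  match j with
  | O => f t y z
  | 1%nat => f x t z
  | _ => f x y t
  end.

Definition coord (j : nat) (x y z : R) : R :=
  match j with O => x | 1%nat => y | _ => z end.

Definition dlogp (p : nat -> nat -> R -> R -> R -> R) (h i j : nat)
  (x y z : R) : R :=
  deriv1 (fun t => ln (sect j (p h i) x y z t)) (coord j x y z).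

(* Expected Fisher information (entry (j,k)) of the product-trinomial
   model with m0 = m_{+0}, m1 = m_{+1} trials: the sum over the groups of
   m_{+i} times the expected Fisher information of a single categorical
   draw, E[d_j log p * d_k log p] = sum_h p_h d_j log p_h d_k log p_h. *)
Definition fisher (p : nat -> nat -> R -> R -> R -> R) (m0 m1 : nat)
  (j k : nat) (x y z : R) : R :=
  INR m0 * (sum_f_R0 (fun h => p h 0%nat x y z * dlogp p h 0 j x y z
                                  * dlogp p h 0 k x y z) 2)
  + INR m1 * (sum_f_R0 (fun h => p h 1%nat x y z * dlogp p h 1 j x y z
                                  * dlogp p h 1 k x y z) 2).

Definition det3 (M : nat -> nat -> R) : R :=
  M 0%nat 0%nat * (M 1%nat 1%nat * M 2%nat 2%nat - M 1%nat 2%nat * M 2%nat 1%nat)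
  - M 0%nat 1%nat * (M 1%nat 0%nat * M 2%nat 2%nat - M 1%nat 2%nat * M 2%nat 0%nat)
  + M 0%nat 2%nat * (M 1%nat 0%nat * M 2%nat 1%nat - M 1%nat 1%nat * M 2%nat 0%nat).

Definition jeffreysGUV (m0 m1 : nat) (g u v : R) : R :=
  sqrt (det3 (fun j k => fisher pGUV m0 m1 j k g u v)).

Definition pi_gamma (g : R) : R :=
  sqrt 2 / PI * (/ sqrt g * / sqrt (1 - g) / (1 + g)).

From Pilot Require Import Defs.
From Stdlib Require Import Reals ClassicalEpsilon Lra Lia.
From Coquelicot Require Import Coquelicot.
Open Scope R_scope.

(* The Fisher information in (gamma, U, V) is explicit, and its determinant is
   2 m0 m1 (m0 u + m1 v) / ((1+g)^2 g (1-g) u (1-u) v (1-v)), so Jeffreys'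
   density is a constant times k(g) * h(u,v) with
   k(g) = 1 / (sqrt g sqrt (1-g) (1+g)).  The factor k has the primitive
   sqrt 2 * atan (sqrt (2g/(1-g))), hence integral PI / sqrt 2 over (0,1).
   The factor h is nonnegative and bounded by sqrt (1+r) times a product of two
   arcsine kernels 1 / sqrt (t (1-t)) <= 2 k(t), so its integrals
   over the cubes [a,b]^2 increase as the cube grows and are bounded, hence
   converge.  The product form then gives properness, the independence of gamma
   and (U,V), and the marginal of gamma. *)

(** * Limits over the cube *)

Lemma limit_cube_ext F1 F2 L :
  (forall a b, 0 < a < 1/2 -> 1/2 < b < 1 -> F1 a b = F2 a b) ->
  limit_cube F1 L -> limit_cube F2 L.
Proof.
  intros HF H eps Heps. destruct (H eps Heps) as [d [Hd Hlim]].
  exists (Rmin d (1/2)). split; [apply Rmin_glb_lt; lra|].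
  intros a b Ha Hb. pose proof (Rmin_l d (1/2)). pose proof (Rmin_r d (1/2)).
  rewrite <- HF by lra. apply Hlim; lra.
Qed.

Lemma limit_cube_scal F L c :
  limit_cube F L -> limit_cube (fun a b => c * F a b) (c * L).
Proof.
  intros H eps Heps. pose proof (Rabs_pos c).
  destruct (H (eps / (Rabs c + 1))) as [d [Hd Hlim]].
  { apply Rdiv_lt_0_compat; lra. }
  exists d; split; [exact Hd|]. intros a b Ha Hb.
  specialize (Hlim a b Ha Hb). pose proof (Rabs_pos (F a b - L)).
  rewrite <- Rmult_minus_distr_l, Rabs_mult.
  apply Rle_lt_trans with ((Rabs c + 1) * Rabs (F a b - L)); [nra|].
  replace eps with ((Rabs c + 1) * (eps / (Rabs c + 1))) by (field; lra).
  apply Rmult_lt_compat_l; lra.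
Qed.

Lemma limit_cube_mult F G L1 L2 : limit_cube F L1 -> limit_cube G L2 ->
  limit_cube (fun a b => F a b * G a b) (L1 * L2).
Proof.
  intros HF HG eps Heps.
  pose proof (Rabs_pos L1). pose proof (Rabs_pos L2).
  set (e1 := Rmin 1 (eps / (2 * (Rabs L2 + 1)))).
  set (e2 := eps / (2 * (Rabs L1 + 2))).
  assert (He1 : 0 < e1) by (apply Rmin_glb_lt; [lra | apply Rdiv_lt_0_compat; lra]).
  assert (He2 : 0 < e2) by (apply Rdiv_lt_0_compat; lra).
  assert (He1_1 : e1 <= 1) by apply Rmin_l.
  assert (He1_eps : (Rabs L2 + 1) * e1 <= eps / 2).
  { replace (eps / 2) with ((Rabs L2 + 1) * (eps / (2 * (Rabs L2 + 1)))) by (field; lra).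
    apply Rmult_le_compat_l; [lra | apply Rmin_r]. }
  assert (He2_eps : (Rabs L1 + 2) * e2 = eps / 2) by (unfold e2; field; lra).
  destruct (HF e1 He1) as [d1 [Hd1 HF1]].
  destruct (HG e2 He2) as [d2 [Hd2 HG2]].
  exists (Rmin d1 d2). split; [apply Rmin_glb_lt; lra|].
  intros a b Ha Hb. pose proof (Rmin_l d1 d2). pose proof (Rmin_r d1 d2).
  assert (A1 : Rabs (F a b - L1) < e1) by (apply HF1; lra).
  assert (A2 : Rabs (G a b - L2) < e2) by (apply HG2; lra).
  assert (HFb : Rabs (F a b) <= Rabs L1 + 1).
  { replace (F a b) with (L1 + (F a b - L1)) by ring.
    eapply Rle_trans; [apply Rabs_triang | lra]. }
  replace (F a b * G a b - L1 * L2) with (F a b * (G a b - L2) + L2 * (F a b - L1)) by ring.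
  eapply Rle_lt_trans; [apply Rabs_triang|]. rewrite !Rabs_mult.
  assert (Rabs (F a b) * Rabs (G a b - L2) < (Rabs L1 + 2) * e2).
  { apply Rle_lt_trans with ((Rabs L1 + 2) * Rabs (G a b - L2)).
    - apply Rmult_le_compat_r; [apply Rabs_pos | lra].
    - apply Rmult_lt_compat_l; lra. }
  assert (Rabs L2 * Rabs (F a b - L1) <= (Rabs L2 + 1) * e1).
  { apply Rmult_le_compat; try apply Rabs_pos; lra. }
  lra.
Qed.

Lemma continuous_ball (f : R -> R) x eps : continuous f x -> 0 < eps ->
  exists d, 0 < d /\ forall y, Rabs (y - x) < d -> Rabs (f y - f x) < eps.
Proof.
  intros H Heps.
  destruct (proj1 (filterlim_locally f (f x)) H (mkposreal eps Heps)) as [d Hd].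
  exists d. split; [apply cond_pos|]. intros y Hy. exact (Hd y Hy).
Qed.

Lemma limit_cube_continuous_sides (P Q : R -> R) :
  continuous P 0 -> continuous Q 1 -> limit_cube (fun a b => Q b - P a) (Q 1 - P 0).
Proof.
  intros HP HQ eps Heps.
  destruct (continuous_ball P 0 (eps/2) HP ltac:(lra)) as [d1 [Hd1 HP1]].
  destruct (continuous_ball Q 1 (eps/2) HQ ltac:(lra)) as [d2 [Hd2 HQ2]].
  exists (Rmin d1 d2). split; [apply Rmin_glb_lt; lra|].
  intros a b Ha Hb. pose proof (Rmin_l d1 d2). pose proof (Rmin_r d1 d2).
  assert (A1 : Rabs (P a - P 0) < eps/2) by (apply HP1; rewrite Rminus_0_r, Rabs_pos_eq; lra).
  assert (A2 : Rabs (Q b - Q 1) < eps/2) by (apply HQ2; rewrite Rabs_minus_sym, Rabs_pos_eq; lra).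
  replace (Q b - P a - (Q 1 - P 0)) with ((Q b - Q 1) - (P a - P 0)) by ring.
  unfold Rminus at 1. eapply Rle_lt_trans; [apply Rabs_triang|]. rewrite Rabs_Ropp. lra.
Qed.

(* The limit is the supremum of [S] over the cube. *)
Lemma limit_cube_monotone_bounded (S : R -> R -> R) M :
  (forall a a' b b', 0 < a <= a' -> a' < 1/2 -> 1/2 < b' <= b -> b < 1 -> S a' b' <= S a b) ->
  (forall a b, 0 < a < 1/2 -> 1/2 < b < 1 -> S a b <= M) ->
  exists L, limit_cube S L /\ forall a b, 0 < a < 1/2 -> 1/2 < b < 1 -> S a b <= L.
Proof.
  intros Hmono Hbound.
  set (E := fun y => exists a b, 0 < a < 1/2 /\ 1/2 < b < 1 /\ y = S a b).
  destruct (completeness E) as [L [Hub Hlub]].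
  { exists M. intros y [a [b [Ha [Hb ->]]]]. auto. }
  { exists (S (1/4) (3/4)), (1/4), (3/4). repeat split; lra. }
  assert (HL : forall a b, 0 < a < 1/2 -> 1/2 < b < 1 -> S a b <= L).
  { intros a b Ha Hb. apply Hub. exists a, b. auto. }
  exists L. split; [|exact HL]. intros eps Heps.
  destruct (classic (exists a0 b0, 0 < a0 < 1/2 /\ 1/2 < b0 < 1 /\ L - eps < S a0 b0))
    as [[a0 [b0 [Ha0 [Hb0 Hs]]]] | Hnone].
  - exists (Rmin a0 (1 - b0)). split; [apply Rmin_glb_lt; lra|].
    intros a b Ha Hb. pose proof (Rmin_l a0 (1 - b0)). pose proof (Rmin_r a0 (1 - b0)).
    assert (S a0 b0 <= S a b) by (apply Hmono; lra).
    assert (S a b <= L) by (apply HL; lra).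
    apply Rabs_def1; lra.
  - exfalso. enough (L <= L - eps) by lra. apply Hlub.
    intros y [a [b [Ha [Hb ->]]]]. apply Rnot_lt_le. intro. apply Hnone. exists a, b. auto.
Qed.

Lemma RInt_scal_R (f : R -> R) a b c : ex_RInt f a b ->
  RInt (fun x => c * f x) a b = c * RInt f a b.
Proof. exact (RInt_scal f a b c). Qed.

Lemma Defs_RInt_eq f a b : ex_RInt f a b -> Defs.RInt f a b = RInt f a b.
Proof.
  intros H. unfold Defs.RInt.
  destruct (excluded_middle_informative _) as [Hi | Hn].
  - symmetry. apply RInt_Reals.
  - exfalso. apply Hn. constructor. now apply ex_RInt_Reals_0.
Qed.

Lemma Defs_RInt_scal_ext f h c a b : a <= b ->
  (forall x, a <= x <= b -> f x = c * h x) -> ex_RInt h a b ->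
  Defs.RInt f a b = c * RInt h a b.
Proof.
  intros Hab Hfh Hh.
  assert (Hch : ex_RInt (fun x => c * h x) a b) by exact (ex_RInt_scal h a b c Hh).
  assert (Hf : ex_RInt f a b).
  { apply ex_RInt_ext with (fun x => c * h x); [|exact Hch].
    intros x Hx. rewrite Rmin_left, Rmax_right in Hx by lra. symmetry; apply Hfh; lra. }
  rewrite Defs_RInt_eq by exact Hf.
  rewrite <- RInt_scal_R by exact Hh. apply RInt_ext.
  intros x Hx. rewrite Rmin_left, Rmax_right in Hx by lra. apply Hfh; lra.
Qed.

Lemma ex_RInt_continuous_on (f : R -> R) a b : a <= b ->
  (forall x, a <= x <= b -> continuous f x) -> ex_RInt f a b.
Proof.
  intros Hab H. apply (ex_RInt_continuous (V := R_CompleteNormedModule)). intros z Hz.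
  rewrite Rmin_left, Rmax_right in Hz by lra. apply H; lra.
Qed.

Lemma RInt_le_subinterval (f : R -> R) a a' b' b : a <= a' -> a' <= b' -> b' <= b ->
  ex_RInt f a b -> (forall x, a < x < b -> 0 <= f x) -> RInt f a' b' <= RInt f a b.
Proof.
  intros H1 H2 H3 Hf Hpos.
  assert (E1 : ex_RInt f a a') by (apply (ex_RInt_Chasles_1 (V := R_CompleteNormedModule)) with b; [lra | auto]).
  assert (E2 : ex_RInt f a' b) by (apply (ex_RInt_Chasles_2 (V := R_CompleteNormedModule)) with a; [lra | auto]).
  assert (E3 : ex_RInt f a' b') by (apply (ex_RInt_Chasles_1 (V := R_CompleteNormedModule)) with b; [lra | auto]).
  assert (E4 : ex_RInt f b' b) by (apply (ex_RInt_Chasles_2 (V := R_CompleteNormedModule)) with a'; [lra | auto]).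
  pose proof (RInt_Chasles (V := R_CompleteNormedModule) f a a' b E1 E2) as C1.
  pose proof (RInt_Chasles (V := R_CompleteNormedModule) f a' b' b E3 E4) as C2.
  change plus with Rplus in C1, C2.
  assert (0 <= RInt f a a') by (apply RInt_ge_0; auto; intros; apply Hpos; lra).
  assert (0 <= RInt f b' b) by (apply RInt_ge_0; auto; intros; apply Hpos; lra).
  lra.
Qed.

(** * The gamma factor *)

Definition gamma_kernel t := / sqrt t * / sqrt (1 - t) / (1 + t).

Definition gamma_primitive t := sqrt 2 * atan (sqrt (2 * t / (1 - t))).

(* Equal to [gamma_primitive] on (0,1) since [atan x + atan (/x) = PI/2],
   but continuous at 1. *)
Definition gamma_primitive_at1 t := sqrt 2 * (PI / 2 - atan (sqrt ((1 - t) / (2 * t)))).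

Lemma is_derive_gamma_primitive t : 0 < t < 1 ->
  is_derive gamma_primitive t (gamma_kernel t).
Proof.
  intros Ht. unfold gamma_primitive, gamma_kernel. auto_derive.
  { repeat split; try lra. apply Rmult_lt_0_compat; [lra | apply Rinv_0_lt_compat; lra]. }
  assert (Hq : 0 <= 2 * t * / (1 + - t)).
  { apply Rlt_le, Rmult_lt_0_compat; [lra | apply Rinv_0_lt_compat; lra]. }
  assert (Hs : sqrt (2 * t * / (1 + - t)) = sqrt 2 * sqrt t / sqrt (1 - t)).
  { rewrite <- sqrt_mult_alt by lra. unfold Rdiv. rewrite <- sqrt_inv.
    rewrite <- sqrt_mult_alt by lra. f_equal. }
  rewrite !Rmult_1_r, (sqrt_sqrt _ Hq), Hs.
  pose proof (sqrt_lt_R0 2 ltac:(lra)). pose proof (sqrt_lt_R0 t ltac:(lra)).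
  pose proof (sqrt_lt_R0 (1 - t) ltac:(lra)). pose proof (sqrt_sqrt (1 - t) ltac:(lra)) as Ec.
  set (a := sqrt 2) in *. set (b := sqrt t) in *. set (c := sqrt (1 - t)) in *.
  clearbody a b c. replace (1 + - t) with (c * c) by lra.
  replace t with (1 - c * c) by lra. field. repeat split; try lra; nra.
Qed.

Lemma gamma_primitive_at1_eq t : 0 < t < 1 -> gamma_primitive t = gamma_primitive_at1 t.
Proof.
  intros Ht. unfold gamma_primitive, gamma_primitive_at1. f_equal.
  assert (0 < sqrt ((1 - t) / (2 * t))) by (apply sqrt_lt_R0, Rdiv_lt_0_compat; lra).
  rewrite <- atan_inv by auto. f_equal. rewrite <- sqrt_inv. f_equal. field. lra.
Qed.

Lemma continuous_gamma_primitive_0 : continuous gamma_primitive 0.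
Proof.
  apply (continuous_mult (fun _ => sqrt 2) (fun t => atan (sqrt (2 * t / (1 - t))))).
  - apply continuous_const.
  - apply continuous_atan_comp, continuous_sqrt_comp.
    apply (@ex_derive_continuous R_AbsRing R_NormedModule). auto_derive. lra.
Qed.

Lemma continuous_gamma_primitive_at1_1 : continuous gamma_primitive_at1 1.
Proof.
  apply (continuous_mult (fun _ => sqrt 2) (fun t => PI / 2 - atan (sqrt ((1 - t) / (2 * t))))).
  - apply continuous_const.
  - apply (continuous_minus (fun _ => PI / 2) (fun t => atan (sqrt ((1 - t) / (2 * t))))).
    + apply continuous_const.
    + apply continuous_atan_comp, continuous_sqrt_comp.
      apply (@ex_derive_continuous R_AbsRing R_NormedModule). auto_derive. lra.
Qed.

Lemma continuous_gamma_kernel t : 0 < t < 1 -> continuous gamma_kernel t.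
Proof.
  intros Ht. apply (@ex_derive_continuous R_AbsRing R_NormedModule).
  unfold gamma_kernel. auto_derive. repeat split; try lra; apply Rgt_not_eq, sqrt_lt_R0; lra.
Qed.

Lemma is_RInt_gamma_kernel a b : 0 < a -> a <= b -> b < 1 ->
  is_RInt gamma_kernel a b (gamma_primitive b - gamma_primitive a).
Proof.
  intros Ha Hab Hb.
  apply (is_RInt_derive gamma_primitive gamma_kernel a b); intros x Hx;
    rewrite Rmin_left, Rmax_right in Hx by lra.
  - apply is_derive_gamma_primitive; lra.
  - apply continuous_gamma_kernel; lra.
Qed.

Lemma ex_RInt_gamma_kernel a b : 0 < a -> a <= b -> b < 1 -> ex_RInt gamma_kernel a b.
Proof. intros. eexists. now apply is_RInt_gamma_kernel. Qed.

Lemma RInt_gamma_kernel a b : 0 < a -> a <= b -> b < 1 ->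
  RInt gamma_kernel a b = gamma_primitive b - gamma_primitive a.
Proof. intros. now apply is_RInt_unique, is_RInt_gamma_kernel. Qed.

Lemma limit_cube_RInt_gamma_kernel : limit_cube (RInt gamma_kernel) (PI / sqrt 2).
Proof.
  apply limit_cube_ext with (fun a b => gamma_primitive_at1 b - gamma_primitive a).
  { intros a b Ha Hb. rewrite RInt_gamma_kernel, (gamma_primitive_at1_eq b); lra. }
  replace (PI / sqrt 2) with (gamma_primitive_at1 1 - gamma_primitive 0).
  { apply limit_cube_continuous_sides.
    - exact continuous_gamma_primitive_0.
    - exact continuous_gamma_primitive_at1_1. }
  unfold gamma_primitive, gamma_primitive_at1.
  replace (2 * 0 / (1 - 0)) with 0 by field. replace ((1 - 1) / (2 * 1)) with 0 by field.
  rewrite sqrt_0, atan_0.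
  pose proof (sqrt_sqrt 2 ltac:(lra)). pose proof (sqrt_lt_R0 2 ltac:(lra)).
  apply Rmult_eq_reg_r with (sqrt 2); [|lra].
  field_simplify; [|lra]. replace (sqrt 2 ^ 2) with (sqrt 2 * sqrt 2) by ring.
  rewrite H. field.
Qed.

Lemma RInt_gamma_kernel_le a b : 0 < a -> a <= b -> b < 1 ->
  RInt gamma_kernel a b <= sqrt 2 * (PI / 2).
Proof.
  intros Ha Hab Hb. rewrite RInt_gamma_kernel by auto.
  assert (Hatan : forall t, 0 < t < 1 -> 0 <= atan (sqrt (2 * t / (1 - t))) <= PI / 2).
  { intros t Ht. split.
    - rewrite <- atan_0. left. apply atan_increasing, sqrt_lt_R0, Rdiv_lt_0_compat; lra.
    - destruct (atan_bound (sqrt (2 * t / (1 - t)))). lra. }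
  destruct (Hatan a ltac:(lra)), (Hatan b ltac:(lra)).
  unfold gamma_primitive. pose proof (sqrt_pos 2). nra.
Qed.

(** * The (U,V) factor *)

Definition arcsine_kernel t := / sqrt t * / sqrt (1 - t).

Lemma arcsine_kernel_pos t : 0 < t < 1 -> 0 < arcsine_kernel t.
Proof.
  intros. unfold arcsine_kernel.
  apply Rmult_lt_0_compat; apply Rinv_0_lt_compat, sqrt_lt_R0; lra.
Qed.

Lemma continuous_arcsine_kernel t : 0 < t < 1 -> continuous arcsine_kernel t.
Proof.
  intros Ht. apply (@ex_derive_continuous R_AbsRing R_NormedModule).
  unfold arcsine_kernel. auto_derive. repeat split; try lra; apply Rgt_not_eq, sqrt_lt_R0; lra.
Qed.

Lemma ex_RInt_arcsine_kernel a b : 0 < a -> a <= b -> b < 1 -> ex_RInt arcsine_kernel a b.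
Proof. intros. apply ex_RInt_continuous_on; auto. intros; apply continuous_arcsine_kernel; lra. Qed.

Lemma RInt_arcsine_kernel_ge0 a b : 0 < a -> a <= b -> b < 1 -> 0 <= RInt arcsine_kernel a b.
Proof.
  intros. apply RInt_ge_0; auto. apply ex_RInt_arcsine_kernel; auto.
  intros; left; apply arcsine_kernel_pos; lra.
Qed.

(* [arcsine_kernel <= 2 * gamma_kernel] on (0,1). *)
Lemma RInt_arcsine_kernel_le a b : 0 < a -> a <= b -> b < 1 ->
  RInt arcsine_kernel a b <= sqrt 2 * PI.
Proof.
  intros Ha Hab Hb.
  apply Rle_trans with (RInt (fun t => 2 * gamma_kernel t) a b).
  - apply RInt_le; auto.
    + apply ex_RInt_arcsine_kernel; auto.
    + apply (ex_RInt_scal gamma_kernel), ex_RInt_gamma_kernel; auto.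
    + intros x Hx. pose proof (arcsine_kernel_pos x ltac:(lra)).
      assert (/ 2 <= / (1 + x)) by (apply Rinv_le_contravar; lra).
      unfold gamma_kernel, Rdiv. fold (arcsine_kernel x). nra.
  - rewrite RInt_scal_R by (apply ex_RInt_gamma_kernel; auto).
    pose proof (RInt_gamma_kernel_le a b Ha Hab Hb). lra.
Qed.

Lemma sqrt_minus_le s t : 0 <= s -> 0 <= t -> Rabs (sqrt s - sqrt t) <= sqrt (Rabs (s - t)).
Proof.
  assert (K : forall s t, 0 <= t <= s -> sqrt s - sqrt t <= sqrt (s - t)).
  { intros s0 t0 H. pose proof (sqrt_pos t0). pose proof (sqrt_pos (s0 - t0)).
    enough (sqrt s0 <= sqrt t0 + sqrt (s0 - t0)) by lra.
    rewrite <- (sqrt_square (sqrt t0 + sqrt (s0 - t0))) by lra.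
    apply sqrt_le_1_alt.
    pose proof (sqrt_sqrt t0 ltac:(lra)). pose proof (sqrt_sqrt (s0 - t0) ltac:(lra)). nra. }
  intros Hs Ht. destruct (Rle_dec t s).
  - assert (sqrt t <= sqrt s) by (apply sqrt_le_1_alt; lra).
    rewrite !Rabs_pos_eq by lra. apply K; lra.
  - assert (sqrt s <= sqrt t) by (apply sqrt_le_1_alt; lra).
    rewrite Rabs_minus_sym, (Rabs_minus_sym s), !Rabs_pos_eq by lra. apply K; lra.
Qed.

Section UVIntegral.

Variable r : R.
Hypothesis r_ge0 : 0 <= r.

Definition uv_inner_kernel x y := sqrt (x + r * y) * arcsine_kernel y.
Definition uv_inner_integral a b x := RInt (uv_inner_kernel x) a b.
Definition uv_integral a b := RInt (fun x => arcsine_kernel x * uv_inner_integral a b x) a b.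

Lemma continuous_uv_inner_kernel x y : 0 < x -> 0 < y < 1 -> continuous (uv_inner_kernel x) y.
Proof.
  intros Hx Hy. apply (@ex_derive_continuous R_AbsRing R_NormedModule).
  unfold uv_inner_kernel, arcsine_kernel. auto_derive.
  repeat split; try lra; try nra; apply Rgt_not_eq, sqrt_lt_R0; lra.
Qed.

Lemma ex_RInt_uv_inner_kernel x a b : 0 < x -> 0 < a -> a <= b -> b < 1 ->
  ex_RInt (uv_inner_kernel x) a b.
Proof. intros. apply ex_RInt_continuous_on; auto. intros; apply continuous_uv_inner_kernel; lra. Qed.

Lemma uv_inner_kernel_ge0 x y : 0 < y < 1 -> 0 <= uv_inner_kernel x y.
Proof.
  intros. apply Rmult_le_pos; [apply sqrt_pos | left; apply arcsine_kernel_pos; auto].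
Qed.

Lemma uv_inner_integral_ge0 a b x : 0 < a -> a <= b -> b < 1 -> 0 < x ->
  0 <= uv_inner_integral a b x.
Proof.
  intros. apply RInt_ge_0; auto.
  - apply ex_RInt_uv_inner_kernel; auto.
  - intros; apply uv_inner_kernel_ge0; lra.
Qed.

(* [sqrt] is 1/2-Hölder, which makes the inner integral continuous in [x]. *)
Lemma uv_inner_integral_holder a b x x' : 0 < x -> 0 < x' -> 0 < a -> a <= b -> b < 1 ->
  Rabs (uv_inner_integral a b x - uv_inner_integral a b x')
    <= sqrt (Rabs (x - x')) * RInt arcsine_kernel a b.
Proof.
  intros Hx Hx' Ha Hab Hb. set (s := sqrt (Rabs (x - x'))).
  assert (Ek : ex_RInt arcsine_kernel a b) by (apply ex_RInt_arcsine_kernel; auto).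
  assert (Es : ex_RInt (fun y => s * arcsine_kernel y) a b) by exact (ex_RInt_scal _ a b s Ek).
  assert (Ed : ex_RInt (fun y => uv_inner_kernel x y - uv_inner_kernel x' y) a b).
  { exact (ex_RInt_minus (V := R_NormedModule) _ _ a b
      (ex_RInt_uv_inner_kernel x a b Hx Ha Hab Hb) (ex_RInt_uv_inner_kernel x' a b Hx' Ha Hab Hb)). }
  assert (Hpt : forall y, a < y < b ->
    Rabs (uv_inner_kernel x y - uv_inner_kernel x' y) <= s * arcsine_kernel y).
  { intros y Hy. unfold uv_inner_kernel.
    rewrite <- Rmult_minus_distr_r, Rabs_mult, (Rabs_pos_eq (arcsine_kernel y))
      by (left; apply arcsine_kernel_pos; lra).
    apply Rmult_le_compat_r; [left; apply arcsine_kernel_pos; lra|].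
    unfold s. replace (x - x') with ((x + r * y) - (x' + r * y)) by ring.
    apply sqrt_minus_le; nra. }
  unfold uv_inner_integral.
  rewrite <- (RInt_minus (V := R_CompleteNormedModule)) by (apply ex_RInt_uv_inner_kernel; auto).
  change minus with Rminus.
  apply Rabs_le. split.
  - apply Rle_trans with (RInt (fun y => - s * arcsine_kernel y) a b).
    + rewrite RInt_scal_R by exact Ek. lra.
    + apply RInt_le; auto; [exact (ex_RInt_scal _ a b _ Ek)|].
      intros y Hy. specialize (Hpt y Hy). apply Rabs_le_between in Hpt. lra.
  - apply Rle_trans with (RInt (fun y => s * arcsine_kernel y) a b).
    + apply RInt_le; auto. intros y Hy. specialize (Hpt y Hy). apply Rabs_le_between in Hpt. lra.
    + rewrite RInt_scal_R by exact Ek. lra.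
Qed.

Lemma continuous_uv_inner_integral a b x : 0 < x -> 0 < a -> a <= b -> b < 1 ->
  continuous (uv_inner_integral a b) x.
Proof.
  intros Hx Ha Hab Hb. apply (proj2 (filterlim_locally _ _)). intros eps.
  set (K := RInt arcsine_kernel a b).
  assert (HK : 0 <= K) by (apply RInt_arcsine_kernel_ge0; auto).
  set (e := eps / (K + 1)).
  assert (He : 0 < e) by (apply Rdiv_lt_0_compat; [apply cond_pos | lra]).
  assert (Hd : 0 < Rmin (x / 2) (e * e)) by (apply Rmin_glb_lt; [lra | nra]).
  exists (mkposreal _ Hd). intros y Hy. change (Rabs (y - x) < Rmin (x / 2) (e * e)) in Hy.
  pose proof (Rmin_l (x / 2) (e * e)). pose proof (Rmin_r (x / 2) (e * e)).
  assert (Hy0 : 0 < y) by (apply Rabs_lt_between in Hy; lra).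
  assert (Hs : sqrt (Rabs (y - x)) < e).
  { rewrite <- (sqrt_square e) by lra. apply sqrt_lt_1_alt. split; [apply Rabs_pos | lra]. }
  change (Rabs (uv_inner_integral a b y - uv_inner_integral a b x) < eps).
  eapply Rle_lt_trans; [apply uv_inner_integral_holder; auto|]. fold K.
  apply Rle_lt_trans with (e * K); [apply Rmult_le_compat_r; lra|].
  replace (pos eps) with (e * (K + 1)) by (unfold e; field; lra). nra.
Qed.

Lemma ex_RInt_uv_outer a b a' b' : 0 < a' -> a' <= b' -> b' < 1 -> 0 < a -> a <= b -> b < 1 ->
  ex_RInt (fun x => arcsine_kernel x * uv_inner_integral a b x) a' b'.
Proof.
  intros. apply ex_RInt_continuous_on; auto. intros x Hx.
  apply (continuous_mult (K := R_AbsRing) arcsine_kernel (uv_inner_integral a b)).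
  - apply continuous_arcsine_kernel; lra.
  - apply continuous_uv_inner_integral; lra.
Qed.

Lemma uv_integral_le_subcube a a' b b' : 0 < a <= a' -> a' <= b' -> b' <= b -> b < 1 ->
  uv_integral a' b' <= uv_integral a b.
Proof.
  intros. unfold uv_integral.
  apply Rle_trans with (RInt (fun x => arcsine_kernel x * uv_inner_integral a b x) a' b').
  - apply RInt_le; try apply ex_RInt_uv_outer; try lra.
    intros x Hx. apply Rmult_le_compat_l; [left; apply arcsine_kernel_pos; lra|].
    apply RInt_le_subinterval; try lra.
    + apply ex_RInt_uv_inner_kernel; lra.
    + intros; apply uv_inner_kernel_ge0; lra.
  - apply RInt_le_subinterval; try lra.
    + apply ex_RInt_uv_outer; lra.
    + intros x Hx. apply Rmult_le_pos; [left; apply arcsine_kernel_pos; lra|].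
      apply uv_inner_integral_ge0; lra.
Qed.

Lemma uv_integral_le a b : 0 < a -> a <= b -> b < 1 ->
  uv_integral a b <= sqrt (1 + r) * (sqrt 2 * PI) * (sqrt 2 * PI).
Proof.
  intros Ha Hab Hb.
  pose proof (RInt_arcsine_kernel_le a b Ha Hab Hb).
  pose proof (RInt_arcsine_kernel_ge0 a b Ha Hab Hb).
  assert (Ek : ex_RInt arcsine_kernel a b) by (apply ex_RInt_arcsine_kernel; auto).
  assert (Hinner : forall x, 0 < x < 1 -> uv_inner_integral a b x <= sqrt (1 + r) * (sqrt 2 * PI)).
  { intros x Hx. apply Rle_trans with (RInt (fun y => sqrt (1 + r) * arcsine_kernel y) a b).
    - apply RInt_le; auto.
      + apply ex_RInt_uv_inner_kernel; lra.
      + exact (ex_RInt_scal _ a b _ Ek).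
      + intros y Hy. apply Rmult_le_compat_r; [left; apply arcsine_kernel_pos; lra|].
        apply sqrt_le_1_alt. nra.
    - rewrite RInt_scal_R by exact Ek.
      apply Rmult_le_compat_l; [apply sqrt_pos | lra]. }
  unfold uv_integral.
  apply Rle_trans with (RInt (fun x => (sqrt (1 + r) * (sqrt 2 * PI)) * arcsine_kernel x) a b).
  - apply RInt_le; auto.
    + apply ex_RInt_uv_outer; auto.
    + exact (ex_RInt_scal _ a b _ Ek).
    + intros x Hx. rewrite Rmult_comm.
      apply Rmult_le_compat_r; [left; apply arcsine_kernel_pos; lra | apply Hinner; lra].
  - rewrite RInt_scal_R by exact Ek.
    apply Rmult_le_compat_l; [|lra].
    pose proof (sqrt_pos (1 + r)). pose proof (sqrt_pos 2). pose proof PI_RGT_0. nra.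
Qed.

Lemma uv_integral_pos : 0 < uv_integral (1/4) (3/4).
Proof.
  unfold uv_integral. apply RInt_gt_0; [lra| |].
  - intros x Hx. apply Rmult_lt_0_compat; [apply arcsine_kernel_pos; lra|].
    apply RInt_gt_0; [lra| |].
    + intros y Hy. apply Rmult_lt_0_compat; [apply sqrt_lt_R0; nra | apply arcsine_kernel_pos; lra].
    + intros; apply continuous_uv_inner_kernel; lra.
  - intros x Hx.
    apply (continuous_mult (K := R_AbsRing) arcsine_kernel (uv_inner_integral _ _)).
    + apply continuous_arcsine_kernel; lra.
    + apply continuous_uv_inner_integral; lra.
Qed.

Lemma limit_cube_uv_integral : exists W, 0 < W /\ limit_cube uv_integral W.
Proof.
  destruct (limit_cube_monotone_bounded uv_integral
              (sqrt (1 + r) * (sqrt 2 * PI) * (sqrt 2 * PI))) as [W [HW Hle]].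
  - intros. apply uv_integral_le_subcube; lra.
  - intros. apply uv_integral_le; lra.
  - exists W. split; [|exact HW].
    pose proof uv_integral_pos. pose proof (Hle (1/4) (3/4) ltac:(lra) ltac:(lra)). lra.
Qed.

Lemma int2_uv_integral G c a b : 0 < a -> a <= b -> b < 1 ->
  (forall x y, a <= x <= b -> a <= y <= b ->
     G x y = c * (arcsine_kernel x * uv_inner_kernel x y)) ->
  int2 G a b = c * uv_integral a b.
Proof.
  intros Ha Hab Hb HG. unfold int2, uv_integral.
  apply Defs_RInt_scal_ext; [lra| |apply ex_RInt_uv_outer; auto].
  intros x Hx. unfold uv_inner_integral. rewrite <- Rmult_assoc.
  apply Defs_RInt_scal_ext; [lra| |].
  - intros y Hy. rewrite HG by auto. ring.
  - apply ex_RInt_uv_inner_kernel; lra.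
Qed.

End UVIntegral.

(** * Reparameterization and Fisher information *)

Lemma phi_in_cube t : inOmega t -> let '(g, u, v) := phi t in in01 g /\ in01 u /\ in01 v.
Proof.
  destruct t as [[g l0] l1]. intros [Hg [H0 H1]]. simpl. unfold in01.
  assert (Hscale : forall l, 0 < l < 1 / (1 + g) -> 0 < (1 + g) * l < 1).
  { intros l Hl. split; [apply Rmult_lt_0_compat; lra|].
    replace 1 with ((1 + g) * (1 / (1 + g))) at 2 by (field; lra).
    apply Rmult_lt_compat_l; lra. }
  auto.
Qed.

Lemma phi_unique_preimage g u v : in01 g -> in01 u -> in01 v ->
  exists! t, inOmega t /\ phi t = (g, u, v).
Proof.
  unfold in01. intros Hg Hu Hv. exists (g, u / (1 + g), v / (1 + g)). split.
  - split.
    + split; [exact Hg|]. split; split; try (apply Rdiv_lt_0_compat; lra);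
        apply Rmult_lt_compat_r; try (apply Rinv_0_lt_compat; lra); lra.
    + simpl. f_equal; [f_equal|]; field; lra.
  - intros [[g' l0] l1] [_ He]. simpl in He. injection He as -> E0 E1.
    rewrite <- E0, <- E1. f_equal; [f_equal|]; field; lra.
Qed.

Lemma deriv1_eq f x l : is_derive f x l -> deriv1 f x = l.
Proof.
  intro H. apply is_derive_Reals in H. unfold deriv1.
  pose proof (epsilon_spec (inhabits 0) (fun l => derivable_pt_lim f x l) (ex_intro _ l H)).
  eapply uniqueness_limite; eauto.
Qed.

Section FisherInformation.

Variables g u v : R.
Hypotheses (Hg : 0 < g < 1) (Hu : 0 < u < 1) (Hv : 0 < v < 1).

Definition score (h i j : nat) : R :=
  match i, h, j with
  | O, O, 1%nat => - / (1 - u)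
  | O, 1%nat, O => / (g * (1 + g))
  | O, 1%nat, 1%nat => / u
  | O, 2%nat, O => - (2 / ((1 - g) * (1 + g)))
  | O, 2%nat, 1%nat => / u
  | 1%nat, O, 2%nat => - / (1 - v)
  | 1%nat, 1%nat, O => / (g * (1 + g))
  | 1%nat, 1%nat, 2%nat => / v
  | 1%nat, 2%nat, O => - (2 / ((1 - g) * (1 + g)))
  | 1%nat, 2%nat, 2%nat => / v
  | _, _, _ => 0
  end.

Lemma dlogp_pGUV h i j : (h < 3)%nat -> (i < 2)%nat -> (j < 3)%nat ->
  dlogp pGUV h i j g u v = score h i j.
Proof.
  assert (E : forall w, (1 + g) * (w * / (1 + g)) = w) by (intros; field; lra).
  intros. destruct h as [|[|[|h]]]; try lia; destruct i as [|[|i]]; try lia;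
    destruct j as [|[|[|j]]]; try lia;
    unfold score, dlogp, sect, coord, pGUV, pOmega, pcell; simpl;
    (apply deriv1_eq; auto_derive;
     [ repeat split; try rewrite E; try lra;
       repeat (apply Rmult_lt_0_compat || apply Rinv_0_lt_compat); lra
     | field; lra ]).
Qed.

Variables m0 m1 : nat.

Lemma det_fisher_pGUV : det3 (fun j k => fisher pGUV m0 m1 j k g u v) =
  2 * (INR m0 * u + INR m1 * v) * INR m0 * INR m1 /
  ((1 + g) * (1 + g) * g * (1 - g) * u * (1 - u) * v * (1 - v)).
Proof.
  unfold det3, fisher; simpl sum_f_R0.
  rewrite !dlogp_pGUV by lia. unfold score, pGUV, pOmega, pcell; simpl.
  field. lra.
Qed.

End FisherInformation.

(** * Jeffreys' prior *)

Section JeffreysPrior.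

Variables m0 m1 : nat.
Hypotheses (m0_pos : (1 <= m0)%nat) (m1_pos : (1 <= m1)%nat).

Let r := INR m1 / INR m0.

Lemma INR_m0_pos : 0 < INR m0.
Proof. apply lt_0_INR; lia. Qed.

Lemma INR_m1_pos : 0 < INR m1.
Proof. apply lt_0_INR; lia. Qed.

Lemma r_ge0 : 0 <= r.
Proof. left. apply Rdiv_lt_0_compat; [apply INR_m1_pos | apply INR_m0_pos]. Qed.

Definition jeffreys_const := sqrt (2 * INR m0 * INR m0 * INR m1).

Lemma jeffreys_const_pos : 0 < jeffreys_const.
Proof.
  pose proof INR_m0_pos. pose proof INR_m1_pos.
  apply sqrt_lt_R0. repeat apply Rmult_lt_0_compat; lra.
Qed.

(* Both sides are nonnegative and have the same square, by [det_fisher_pGUV]. *)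
Lemma jeffreysGUV_eq g u v : in01 g -> in01 u -> in01 v ->
  jeffreysGUV m0 m1 g u v =
  jeffreys_const * (/ sqrt g * / sqrt (1 - g) / (1 + g) * sqrt (u + r * v)
                    * / sqrt u * / sqrt (1 - u) * / sqrt v * / sqrt (1 - v)).
Proof.
  unfold in01. intros Hg Hu Hv.
  pose proof INR_m0_pos. pose proof INR_m1_pos.
  assert (Hw : 0 < u + r * v).
  { assert (0 <= r * v) by (apply Rmult_le_pos; [apply r_ge0 | lra]). lra. }
  pose proof jeffreys_const_pos as HC.
  unfold jeffreysGUV. rewrite det_fisher_pGUV by auto.
  assert (Hm : 0 <= 2 * INR m0 * INR m0 * INR m1)
    by (apply Rlt_le; repeat apply Rmult_lt_0_compat; lra).
  apply sqrt_lem_1.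
  { assert (0 < INR m0 * u + INR m1 * v) by nra.
    apply Rlt_le. unfold Rdiv.
    repeat (apply Rmult_lt_0_compat || apply Rinv_0_lt_compat); lra. }
  { apply Rmult_le_pos; [lra|].
    repeat (apply Rmult_le_pos || apply Rlt_le, Rinv_0_lt_compat || unfold Rdiv);
      try apply sqrt_pos; try apply sqrt_lt_R0; lra. }
  pose proof (sqrt_sqrt _ Hm) as eC.
  pose proof (sqrt_sqrt _ (Rlt_le _ _ Hw)) as eW.
  pose proof (sqrt_sqrt g ltac:(lra)) as eg. pose proof (sqrt_sqrt (1 - g) ltac:(lra)) as eg'.
  pose proof (sqrt_sqrt u ltac:(lra)) as eu. pose proof (sqrt_sqrt (1 - u) ltac:(lra)) as eu'.
  pose proof (sqrt_sqrt v ltac:(lra)) as ev. pose proof (sqrt_sqrt (1 - v) ltac:(lra)) as ev'.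
  pose proof (sqrt_lt_R0 g ltac:(lra)). pose proof (sqrt_lt_R0 (1 - g) ltac:(lra)).
  pose proof (sqrt_lt_R0 u ltac:(lra)). pose proof (sqrt_lt_R0 (1 - u) ltac:(lra)).
  pose proof (sqrt_lt_R0 v ltac:(lra)). pose proof (sqrt_lt_R0 (1 - v) ltac:(lra)).
  unfold jeffreys_const in *.
  set (A := sqrt (2 * INR m0 * INR m0 * INR m1)) in *. set (B := sqrt (u + r * v)) in *.
  set (sg := sqrt g) in *. set (s1g := sqrt (1 - g)) in *.
  set (su := sqrt u) in *. set (s1u := sqrt (1 - u)) in *.
  set (sv := sqrt v) in *. set (s1v := sqrt (1 - v)) in *.
  transitivity ((A * A) * (B * B) / ((sg * sg) * (s1g * s1g) * ((1 + g) * (1 + g))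
                  * (su * su) * (s1u * s1u) * (sv * sv) * (s1v * s1v))).
  - field. repeat split; lra.
  - rewrite eC, eW, eg, eg', eu, eu', ev, ev'. unfold r. field. repeat split; lra.
Qed.

Lemma jeffreysGUV_factor g u v : in01 g -> in01 u -> in01 v ->
  jeffreysGUV m0 m1 g u v =
  jeffreys_const * (gamma_kernel g * (arcsine_kernel u * uv_inner_kernel r u v)).
Proof.
  intros Hg Hu Hv. rewrite jeffreysGUV_eq by auto.
  unfold gamma_kernel, uv_inner_kernel, arcsine_kernel. ring.
Qed.

Variable W : R.
Hypotheses (W_pos : 0 < W) (W_lim : limit_cube (uv_integral r) W).

Let Z := jeffreys_const * (W * (PI / sqrt 2)).

Lemma Z_pos : 0 < Z.
Proof.
  pose proof jeffreys_const_pos. pose proof PI_RGT_0. pose proof (sqrt_lt_R0 2 ltac:(lra)).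
  apply Rmult_lt_0_compat; [lra|]. apply Rmult_lt_0_compat; [lra|]. apply Rdiv_lt_0_compat; lra.
Qed.

Lemma improper3_jeffreysGUV : improper3 (jeffreysGUV m0 m1) Z.
Proof.
  apply limit_cube_ext with
    (fun a b => jeffreys_const * (uv_integral r a b * RInt gamma_kernel a b)).
  2:{ apply limit_cube_scal, limit_cube_mult; [exact W_lim | exact limit_cube_RInt_gamma_kernel]. }
  intros a b Ha Hb. unfold int3. rewrite <- Rmult_assoc. symmetry.
  apply Defs_RInt_scal_ext; [lra | | apply ex_RInt_gamma_kernel; lra].
  intros g Hg.
  rewrite (int2_uv_integral r r_ge0 _ (jeffreys_const * gamma_kernel g)); [ring | lra .. |].
  intros x y Hx Hy. rewrite jeffreysGUV_factor by (unfold in01; lra). ring.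
Qed.

Lemma improper2_jeffreysGUV_marginal g : in01 g ->
  improper2 (fun u v => jeffreysGUV m0 m1 g u v / Z) (pi_gamma g).
Proof.
  unfold in01. intros Hg. pose proof Z_pos.
  set (c := jeffreys_const * gamma_kernel g / Z).
  replace (pi_gamma g) with (c * W).
  2:{ pose proof (sqrt_lt_R0 g ltac:(lra)). pose proof (sqrt_lt_R0 (1 - g) ltac:(lra)).
      pose proof jeffreys_const_pos. pose proof PI_RGT_0. pose proof (sqrt_lt_R0 2 ltac:(lra)).
      unfold c, pi_gamma, Z, gamma_kernel. field. repeat split; lra. }
  apply limit_cube_ext with (fun a b => c * uv_integral r a b); [|exact (limit_cube_scal _ _ c W_lim)].
  intros a b Ha Hb. symmetry. apply int2_uv_integral; try lra; [apply r_ge0|].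
  intros x y Hx Hy. rewrite jeffreysGUV_factor by (unfold in01; lra). unfold c. field. lra.
Qed.

Lemma jeffreysGUV_gamma_independent u v : in01 u -> in01 v ->
  exists q, improper1 (fun g => jeffreysGUV m0 m1 g u v / Z) q /\
    forall g, in01 g -> jeffreysGUV m0 m1 g u v / Z = pi_gamma g * q.
Proof.
  intros Hu Hv. pose proof Z_pos.
  set (c := jeffreys_const * (arcsine_kernel u * uv_inner_kernel r u v) / Z).
  assert (Hc : forall g, in01 g -> jeffreysGUV m0 m1 g u v / Z = c * gamma_kernel g).
  { intros g Hg. rewrite jeffreysGUV_factor by auto. unfold c. field. lra. }
  exists (c * (PI / sqrt 2)). split.
  - apply limit_cube_ext with (fun a b => c * RInt gamma_kernel a b).
    2:{ exact (limit_cube_scal _ _ c limit_cube_RInt_gamma_kernel). }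
    intros a b Ha Hb. symmetry. apply Defs_RInt_scal_ext; [lra| |apply ex_RInt_gamma_kernel; lra].
    intros g Hg. apply Hc. unfold in01. lra.
  - intros g Hg. rewrite Hc by exact Hg. unfold in01 in Hg.
    pose proof (sqrt_lt_R0 g ltac:(lra)). pose proof (sqrt_lt_R0 (1 - g) ltac:(lra)).
    pose proof jeffreys_const_pos. pose proof PI_RGT_0. pose proof (sqrt_lt_R0 2 ltac:(lra)).
    unfold c, pi_gamma, Z, gamma_kernel. field. repeat split; lra.
Qed.

End JeffreysPrior.

Theorem proposition1 (m0 m1 : nat) (Hm0 : (1 <= m0)%nat) (Hm1 : (1 <= m1)%nat) :
  let r := INR m1 / INR m0 in
  (* phi maps Omega bijectively onto (0,1)^3 *)
  (forall t, inOmega t ->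
     let '(g, u, v) := phi t in in01 g /\ in01 u /\ in01 v) /\
  (forall g u v, in01 g -> in01 u -> in01 v ->
     exists! t, inOmega t /\ phi t = (g, u, v)) /\
  (* form of Jeffreys' prior in (gamma, U, V), up to a positive constant *)
  (exists C, 0 < C /\
     forall g u v, in01 g -> in01 u -> in01 v ->
       jeffreysGUV m0 m1 g u v =
       C * (/ sqrt g * / sqrt (1 - g) / (1 + g) * sqrt (u + r * v)
            * / sqrt u * / sqrt (1 - u) * / sqrt v * / sqrt (1 - v))) /\
  (* properness, independence of gamma and (U,V), marginal of gamma *)
  (exists Z, 0 < Z /\
     improper3 (jeffreysGUV m0 m1) Z /\
     (forall g, in01 g ->
        improper2 (fun u v => jeffreysGUV m0 m1 g u v / Z) (pi_gamma g)) /\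
     (forall u v, in01 u -> in01 v ->
        exists q, improper1 (fun g => jeffreysGUV m0 m1 g u v / Z) q /\
          forall g, in01 g ->
            jeffreysGUV m0 m1 g u v / Z = pi_gamma g * q)).
Proof.
  intros r. split; [exact phi_in_cube|]. split; [exact phi_unique_preimage|]. split.
  - exists (jeffreys_const m0 m1). split.
    + exact (jeffreys_const_pos m0 m1 Hm0 Hm1).
    + exact (jeffreysGUV_eq m0 m1 Hm0 Hm1).
  - destruct (limit_cube_uv_integral r (r_ge0 m0 m1 Hm0 Hm1)) as [W [HW HWlim]].
    exists (jeffreys_const m0 m1 * (W * (PI / sqrt 2))). repeat split.
    + exact (Z_pos m0 m1 Hm0 Hm1 W HW).
    + exact (improper3_jeffreysGUV m0 m1 Hm0 Hm1 W HWlim).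
    + exact (improper2_jeffreysGUV_marginal m0 m1 Hm0 Hm1 W HW HWlim).
    + exact (jeffreysGUV_gamma_independent m0 m1 Hm0 Hm1 W HW).
Qed.
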